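(* Let $T=(V,E)$ be a finite rooted tree, $\Pr$ a probability distribution over a finite set of queries, $R\subseteq V$, and $u\in V\setminus R$. Let $\mathrm{hsd}(u,R)=\{v\in T(u)\cap R:\ \mathrm{path}(v,u)\cap R=\emptyset\}$ and let $\mathrm{lsa}(u,R)\in A(u)\cup\{\epsilon\}$ be the lowest proper ancestor of $u$ in $R$ ($\epsilon$ if none). Then the marginal benefit $\Delta(u\mid R)=B(R\cup\{u\})-B(R)$ satisfies $$\Delta(u\mid R)=\mathbb{E}[I(u,\mathrm{lsa}(u,R))]\Big(C(u)-\sum_{v\in\mathrm{hsd}(u,R)}C(v)\Big).$$
   Context: $T=(V,E)$ is a finite rooted tree; $T(u)$ is the set of nodes of the subtree rooted at $u$ (including $u$); $A(u)$ the set of proper ancestors of $u$; for a node $v\in T(u)$, $v\ne u$, $\mathrm{path}(v,u)$ is the set of nodes strictly between $v$ and $u$. Each non-leaf node is associated with a variable of a finite set $X$; $\mathrm{vars}(u)$ is the set of variables of nodes of $T(u)$; each query $q$ determines $Z_q\subseteq X$. For $S\subseteq V$, $w\in V$: $I_q(w,S)=1$ iff $w\in S$, $\mathrm{vars}(w)\subseteq Z_q$, and no $x\in A(w)\cap S$ has $\mathrm{vars}(x)\subseteq Z_q$; else $0$; $\mathbb{E}[I(w,S)]=\sum_q\Pr(q)I_q(w,S)$. Nodes have partial costs $c(x)$ and total costs $C(w)=\sum_{x\in T(w)}c(x)$. Benefit $B(S)=\sum_{w\in S}\mathbb{E}[I(w,S)]C(w)$. Notation: for $a\in A(u)$, $\mathbb{E}[I(u,a)]:=\mathbb{E}[I(u,\{u,a\})]$,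 and $\mathbb{E}[I(u,\epsilon)]:=\mathbb{E}[I(u,\{u\})]$. *)

From mathcomp Require Import all_boot all_order all_algebra.
Set Implicit Arguments. Unset Strict Implicit. Unset Printing Implicit Defensive.
Import Order.TTheory GRing.Theory Num.Theory.
Local Open Scope ring_scope.

Section Tree.
Variables (V : finType) (root : V) (parent : V -> V).

(* A finite rooted tree given by its root and parent map: the root is its
   own parent (convention) and every node reaches the root by iterating
   the parent map. *)
Definition is_rooted_tree : Prop :=
  parent root = root /\ forall v : V, exists n : nat, iter n parent v = root.

Definition anc (u : V) : {set V} :=
  [set a | [exists k : 'I_#|V|, iter k.+1 parent u == a] && (a != u)].

Definition subtree (u : V) : {set V} := [set v | (v == u) || (u \in anc v)].

(* path(v,u): nodes strictly between v and u (for v in T(u), v <> u) *)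
Definition tpath (v u : V) : {set V} := anc v :&: [set x | u \in anc x].

Definition nonleaf (x : V) : bool := [exists w, x \in anc w].

Variables (X : finType) (var : V -> X).

Definition vars (u : V) : {set X} := [set var x | x in subtree u & nonleaf x].

Variables (Q : finType) (Z : Q -> {set X}).

Definition Iq (q : Q) (w : V) (S : {set V}) : bool :=
  [&& w \in S, vars w \subset Z q &
      ~~ [exists x in anc w :&: S, vars x \subset Z q]].

Variables (R : numDomainType) (Pr : Q -> R).

Definition EI (w : V) (S : {set V}) : R := \sum_(q : Q) Pr q * (Iq q w S)%:R.

Variable (c : V -> R).

Definition Ctot (w : V) : R := \sum_(x in subtree w) c x.

Definition benefit (S : {set V}) : R := \sum_(w in S) EI w S * Ctot w.

Definition hsd (u : V) (S : {set V}) : {set V} :=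
  [set v in subtree u :&: S | tpath v u :&: S == set0].

(* lsa(u,R): lowest proper ancestor of u in S, None standing for epsilon *)
Definition lsa (u : V) (S : {set V}) : option V :=
  [pick a in anc u :&: S | anc u :&: S \subset a |: anc a].

Definition EI_anc (u : V) (a : option V) : R :=
  match a with
  | Some a => EI u [set u; a]
  | None => EI u [set u]
  end.

End Tree.

(* Call a node x covered by a query q when vars(x) ⊆ Z_q; coverage is
   inherited by descendants, since vars shrink down the tree.  Adding u to S
   can only switch off I_q(w, .) for w in S, and it does so exactly when u
   is a covered proper ancestor of w while w was counted in S.  Given that u
   is covered, w was counted iff no node of S lies strictly between w and u
   (w is in hsd(u,S)) and no ancestor of u in S is covered, i.e. iff u itself
   is counted in S ∪ {u}; and the latter depends only on the lowest ancestor
   of u in S.  The identity therefore holds query by query. *)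

From mathcomp Require Import all_boot all_order all_algebra.
Import GRing.Theory.

Set Implicit Arguments.
Unset Strict Implicit.
Unset Printing Implicit Defensive.

Lemma fconnect_total (T : finType) (f : T -> T) (x a b : T) :
  fconnect f x a -> fconnect f x b -> fconnect f a b || fconnect f b a.
Proof.
move=> /iter_findex <- /iter_findex <-.
case: (leqP (findex f x a) (findex f x b)) => [le_ab | /ltnW le_ba].
  by rewrite -(subnK le_ab) iterD fconnect_iter.
by rewrite -(subnK le_ba) iterD fconnect_iter orbT.
Qed.

Section Ancestors.

Variables (V : finType) (parent : V -> V).

Local Notation anc := (anc parent).

Lemma ancE (a w : V) : (a \in anc w) = (a != w) && fconnect parent w a.
Proof.
rewrite inE andbC; apply: andb_id2l => a_neq_w.
apply/existsP/idP => [[k /eqP <-] | ]; first exact: fconnect_iter.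
rewrite fconnect_eqVf eq_sym (negPf a_neq_w) fconnect_orbit.
case/trajectP => i lt_i_order ->.
have lt_i : i < #|V| := leq_trans lt_i_order (max_card _).
by exists (Ordinal lt_i); rewrite iterSr.
Qed.

Lemma anc_irr (a : V) : a \notin anc a.
Proof. by rewrite ancE eqxx. Qed.

Lemma anc_total (a b w : V) :
  a \in anc w -> b \in anc w -> [\/ a = b, a \in anc b | b \in anc a].
Proof.
rewrite (ancE a) (ancE b w) => /andP[_ w_a] /andP[_ w_b].
have [-> | a_neq_b] := eqVneq a b; first by constructor 1.
case/orP: (fconnect_total w_a w_b) => [a_b | b_a].
  by constructor 3; rewrite ancE eq_sym a_neq_b.
by constructor 2; rewrite ancE a_neq_b.
Qed.

Variable root : V.
Hypothesis tree : is_rooted_tree root parent.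

Lemma fconnect_from_root (v : V) : fconnect parent root v -> v = root.
Proof. by case: tree => root_fix _ /iter_findex <-; rewrite iter_fix. Qed.

Lemma fcycle_root (w : V) : fconnect parent (parent w) w -> w = root.
Proof.
case: tree => root_fix /(_ w)[n iter_n_w] /iter_findex.
rewrite -iterSr; set p := (findex _ _ _).+1 => period.
have iter_period t : iter (p * t) parent w = w.
  by elim: t => [|t IHt]; rewrite ?muln0 // mulnS iterD IHt period.
rewrite -(iter_period n) -(subnK (leq_pmull n (ltn0Sn _))) iterD iter_n_w.
exact: iter_fix.
Qed.

Lemma anc_trans (a b w : V) : a \in anc b -> b \in anc w -> a \in anc w.
Proof.
rewrite !ancE => /andP[a_neq_b b_a] /andP[b_neq_w w_b].
rewrite (connect_trans w_b b_a) andbT; apply: contraNneq b_neq_w => a_eq_w.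
move: a_neq_b b_a w_b; rewrite a_eq_w => w_neq_b b_w.
rewrite fconnect_eqVf (negPf w_neq_b) /= => parent_w_b.
have w_root := fcycle_root (connect_trans parent_w_b b_w).
by move: parent_w_b; rewrite w_root (proj1 tree) => /fconnect_from_root ->.
Qed.

Lemma anc_proper (a x : V) : a \in anc x -> anc a \proper anc x.
Proof.
move=> a_x; apply/properP; split; last by exists a; rewrite ?anc_irr.
by apply/subsetP => y y_a; apply: anc_trans y_a a_x.
Qed.

Lemma exists_lowest_anc (u x : V) (A : {set V}) :
  A \subset anc u -> x \in A -> exists2 a, a \in A & A \subset a |: anc a.
Proof.
move=> sub_A x_A; case: (arg_maxnP (fun a => #|anc a|) x_A) => a a_A a_max.
exists a => //; apply/subsetP => y y_A; rewrite in_setU1.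
case: (anc_total (subsetP sub_A y y_A) (subsetP sub_A a a_A)) => [-> | -> | a_y].
- by rewrite eqxx.
- by rewrite orbT.
- by have := leq_trans (proper_card (anc_proper a_y)) (a_max y y_A); rewrite ltnn.
Qed.

Lemma anc_tpath (u w : V) :
  u \in anc w -> anc w = tpath parent w u :|: (u |: anc u).
Proof.
move=> u_w; apply/setP => x; rewrite /tpath !(in_setU, in_setI, in_set1) inE.
apply/idP/idP => [x_w | ].
  by case: (anc_total x_w u_w) => [-> | -> | ->]; rewrite ?eqxx ?x_w ?orbT.
case/orP => [/andP[] // | /orP[/eqP -> // | x_u]].
exact: anc_trans x_u u_w.
Qed.

End Ancestors.

Section Queries.

Variables (V : finType) (root : V) (parent : V -> V).
Variables (X : finType) (var : V -> X) (Q : finType) (Z : Q -> {set X}).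
Hypothesis tree : is_rooted_tree root parent.

Local Notation anc := (anc parent).
Local Notation vars := (vars parent var).
Local Notation Iq := (Iq parent var Z).

Lemma vars_anc (u w : V) : u \in anc w -> vars w \subset vars u.
Proof.
move=> u_w; apply/subsetP => y /imsetP[x].
rewrite inE /subtree inE => /andP[/orP[/eqP -> | w_x] nonleaf_x] ->; apply: imset_f.
  by rewrite inE nonleaf_x /subtree inE u_w orbT.
by rewrite inE nonleaf_x /subtree inE (anc_trans tree u_w w_x) orbT.
Qed.

Variable q : Q.

Local Notation covered x := (vars x \subset Z q).

Definition blocked (w : V) (S : {set V}) : bool :=
  [exists x in anc w :&: S, covered x].

Lemma IqE (w : V) (S : {set V}) :
  Iq q w S = [&& w \in S, covered w & ~~ blocked w S].
Proof. by []. Qed.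

Lemma blocked_eq0 (w : V) (S : {set V}) : anc w :&: S = set0 -> blocked w S = false.
Proof. by move=> ancS0; apply/existsP => -[x]; rewrite ancS0 inE. Qed.

Lemma blocked_setU1 (u w : V) (S : {set V}) :
  blocked w (u |: S) = blocked w S || (u \in anc w) && covered u.
Proof.
apply/existsP/orP => [[x] | ].
  rewrite in_setI in_setU1 => /andP[/andP[x_w /orP[/eqP x_u | x_S]] cov_x].
    by right; rewrite -x_u x_w.
  by left; apply/existsP; exists x; rewrite in_setI x_w x_S cov_x.
case=> [/existsP[x /andP[/setIP[x_w x_S] cov_x]] | /andP[u_w cov_u]].
  by exists x; rewrite in_setI in_setU1 x_w x_S orbT cov_x.
by exists u; rewrite in_setI in_setU1 u_w eqxx cov_u.
Qed.

Lemma blocked_set1 (w a : V) : blocked w [set a] = (a \in anc w) && covered a.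
Proof. by rewrite -[[set a]]setU0 blocked_setU1 blocked_eq0 ?setI0. Qed.

Lemma blocked_lowest (u a : V) (S : {set V}) :
  a \in anc u :&: S -> anc u :&: S \subset a |: anc a -> blocked u S = covered a.
Proof.
move=> a_uS lowest; apply/existsP/idP => [[x /andP[x_uS cov_x]] | cov_a].
  move/subsetP/(_ x x_uS): lowest; rewrite in_setU1 => /orP[/eqP <- // | x_a].
  exact: subset_trans (vars_anc x_a) cov_x.
by exists a; rewrite a_uS cov_a.
Qed.

Lemma blocked_tpath (u w : V) (S : {set V}) :
  u \in anc w -> u \notin S -> covered u ->
  blocked w S = (tpath parent w u :&: S != set0) || blocked u S.
Proof.
move=> u_w u_S cov_u; apply/existsP/orP => [[x] | ].
  rewrite (anc_tpath tree u_w) in_setI !in_setU in_set1.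
  case/andP=> /andP[/orP[x_tpath | /orP[/eqP x_u | x_u]] x_S] cov_x.
  - by left; apply/set0Pn; exists x; rewrite in_setI x_tpath x_S.
  - by move: u_S; rewrite -x_u x_S.
  - by right; apply/existsP; exists x; rewrite in_setI x_u x_S cov_x.
case=> [/set0Pn[x /setIP[x_tpath x_S]] | /existsP[x /andP[/setIP[x_u x_S] cov_x]]].
  move: x_tpath; rewrite in_setI inE => /andP[x_w u_x].
  by exists x; rewrite in_setI x_w x_S (subset_trans (vars_anc u_x) cov_u).
by exists x; rewrite in_setI (anc_trans tree x_u u_w) x_S cov_x.
Qed.

Lemma mem_hsd (u w : V) (S : {set V}) : u \notin S -> w \in S ->
  (w \in hsd parent u S) = (u \in anc w) && (tpath parent w u :&: S == set0).
Proof.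
move=> u_S w_S; have w_neq_u : w != u by apply: contraNneq u_S => <-.
by rewrite /hsd inE in_setI w_S andbT /subtree inE (negPf w_neq_u).
Qed.

Lemma Iq_setU1 (u w : V) (S : {set V}) : u \notin S -> w \in S ->
  Iq q w S = Iq q w (u |: S) + ((w \in hsd parent u S) && Iq q u (u |: S)) :> nat.
Proof.
move=> u_S w_S; rewrite !IqE !blocked_setU1 (negPf (anc_irr _ u)) orbF.
rewrite (mem_hsd u_S w_S) !in_setU1 eqxx w_S orbT /=.
case u_w : (u \in anc w) => /=; last by rewrite orbF addn0.
case cov_u : (covered u) => /=; last by rewrite orbF andbF addn0.
rewrite (blocked_tpath u_w u_S cov_u) (subset_trans (vars_anc u_w) cov_u) /=.
by case: (_ == set0); case: (blocked u S).
Qed.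

Lemma Iq_setU1_self (u : V) (S : {set V}) :
  Iq q u (u |: S) = covered u && ~~ blocked u S.
Proof. by rewrite IqE blocked_setU1 (negPf (anc_irr _ u)) orbF setU11. Qed.

Lemma Iq_lsa (u : V) (S : {set V}) :
  Iq q u (u |: S) = Iq q u (if lsa parent u S is Some a then [set u; a] else [set u]).
Proof.
rewrite /lsa; case: pickP => [a /andP[a_uS lowest] | no_lowest].
  have /setIP[a_u _] := a_uS.
  by rewrite !Iq_setU1_self blocked_set1 (blocked_lowest a_uS lowest) a_u.
rewrite -[in RHS](setU0 [set u]) !Iq_setU1_self (blocked_eq0 (setI0 _)).
case: (eqVneq (anc u :&: S) set0) => [ancS0 | /set0Pn[x x_uS]].
  by rewrite (blocked_eq0 ancS0).
have [a a_uS lowest] := exists_lowest_anc tree (subsetIl _ _) x_uS.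
by have := no_lowest a; rewrite a_uS lowest.
Qed.

End Queries.

Section Benefit.

Variables (V : finType) (root : V) (parent : V -> V).
Variables (X : finType) (var : V -> X) (Q : finType) (Z : Q -> {set X}).
Variables (R : numDomainType) (Pr : Q -> R) (c : V -> R).
Hypothesis tree : is_rooted_tree root parent.

Local Open Scope ring_scope.
Local Notation EI := (EI parent var Z Pr).
Local Notation Ctot := (Ctot parent c).

Lemma EI_setU1 (u w : V) (S : {set V}) : u \notin S -> w \in S ->
  EI w S = EI w (u |: S) + (w \in hsd parent u S)%:R * EI u (u |: S).
Proof.
move=> u_S w_S; rewrite /EI mulr_sumr -big_split /=; apply: eq_bigr => q _.
rewrite (Iq_setU1 _ _ tree q u_S w_S) natrD -mulnb natrM mulrDr.
by congr (_ + _); rewrite mulrCA.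
Qed.

Lemma EI_lsa (u : V) (S : {set V}) :
  EI u (u |: S) = EI_anc parent var Z Pr u (lsa parent u S).
Proof.
rewrite /EI_anc /EI; under eq_bigr do rewrite (Iq_lsa _ _ tree).
by case: lsa.
Qed.

Lemma benefit_setU1 (u : V) (S : {set V}) : u \notin S ->
  benefit parent var Z Pr c (u |: S) - benefit parent var Z Pr c S =
  EI u (u |: S) * (Ctot u - \sum_(v in hsd parent u S) Ctot v).
Proof.
move=> u_S; rewrite /benefit big_setU1 //=.
have hsd_sub w : w \in hsd parent u S -> w \in S.
  by rewrite /hsd !inE => /andP[/andP[_ ->]].
have -> : \sum_(w in S) EI w S * Ctot w = \sum_(w in S) EI w (u |: S) * Ctot w
    + EI u (u |: S) * \sum_(v in hsd parent u S) Ctot v.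
  under eq_bigr => w w_S do rewrite (EI_setU1 u_S w_S) mulrDl -mulrA mulr_natl mulrb.
  rewrite big_split -big_mkcondr /= mulr_sumr; congr (_ + _).
  by apply: eq_bigl => w; apply/andb_idl/hsd_sub.
by rewrite addrKA mulrBr.
Qed.

End Benefit.

Local Open Scope ring_scope.

Theorem lemma6 (V : finType) (root : V) (parent : V -> V)
  (X : finType) (var : V -> X) (Q : finType) (Z : Q -> {set X})
  (R : realFieldType) (Pr : Q -> R) (c : V -> R)
  (S : {set V}) (u : V) :
  is_rooted_tree root parent ->
  (forall q, 0 <= Pr q) -> \sum_(q : Q) Pr q = 1 ->
  u \notin S ->
  benefit parent var Z Pr c (u |: S) - benefit parent var Z Pr c S =
  EI_anc parent var Z Pr u (lsa parent u S) *
    (Ctot parent c u - \sum_(v in hsd parent u S) Ctot parent c v).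
Proof.
move=> tree _ _ u_S.
by rewrite (benefit_setU1 var Z Pr c tree u_S) (EI_lsa var Z Pr tree).
Qed.
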